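(* Let $n\ge1$ and let $A$ be a set with an $(n+1)$-ary operation $\theta$, binary operations $\alpha_1,\dots,\alpha_n$ and an element $e\in A$ such that $\alpha_i(a,a)=e$ and $\theta(\alpha_1(a,b),\dots,\alpha_n(a,b),b)=a$ for all $a,b\in A$, and such that $\theta$ is 2-associative, i.e. $\theta(a_1,\dots,a_n,\theta(b_1,\dots,b_n,c))=\theta(\theta(a_1,\dots,a_n,b_1),\dots,\theta(a_1,\dots,a_n,b_n),c)$ for all elements. Then: (a) $\theta(a,a,\dots,a,e)=a$ for every $a\in A$; (b) for any $b,c\in A$ there is a unique $a\in A$ with $\theta(a,a,\dots,a,b)=c$; (c) for any $a,c\in A$ there is a unique $b\in A$ with $\theta(a,a,\dots,a,b)=c$.
   Context: $\theta(a,a,\dots,a,x)$ denotes $\theta$ with $a$ in the first $n$ arguments and $x$ in the last. *)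

From mathcomp Require Import all_boot.
Set Implicit Arguments. Unset Strict Implicit. Unset Printing Implicit Defensive.

(* An (n+1)-ary operation theta on A is represented in curried form as
   theta : ('I_n -> A) -> A -> A : the first n arguments are given as a
   family indexed by 'I_n, the last argument separately. *)

Definition diag_app (A : Type) (n : nat) (theta : ('I_n -> A) -> A -> A)
  (a x : A) : A := theta (fun _ => a) x.

Definition two_associative (A : Type) (n : nat)
  (theta : ('I_n -> A) -> A -> A) : Prop :=
  forall (a b : 'I_n -> A) (c : A),
    theta a (theta b c) = theta (fun i => theta a (b i)) c.

From Stdlib Require Import FunctionalExtensionality.
From mathcomp Require Import all_boot.

Set Implicit Arguments.
Unset Strict Implicit.
Unset Printing Implicit Defensive.

(* The diagonal operation D(a, x) = theta(a,...,a,x) is associative by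
   2-associativity, and e is a left identity for it by the recovery law with
   a = b.  2-associativity then factors theta(a_1,...,a_n,x) as
   D(theta(a_1,...,a_n,e), x), so theta(alpha_1(e,b),...,alpha_n(e,b),e) is a
   left inverse of b.  A semigroup with a left identity and left inverses is a
   group, and (a)-(c) are the right identity law and the unique solvability of
   a * b = c in that group. *)

Section LeftAxiomsGroup.

Variables (T : Type) (op : T -> T -> T) (e : T) (inv : T -> T).
Hypotheses (opA : associative op) (op1x : left_id e op)
  (opVx : left_inverse e inv op).

Lemma lgroup_mulKg x y : op (inv x) (op x y) = y.
Proof. by rewrite opA opVx op1x. Qed.

Lemma lgroup_mulgV x : op x (inv x) = e.
Proof.
transitivity (op (inv (inv x)) (op (inv x) (op x (inv x)))).
  by rewrite lgroup_mulKg.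
by rewrite (lgroup_mulKg x) opVx.
Qed.

Lemma lgroup_mulg1 : right_id e op.
Proof. by move=> x; rewrite -(opVx x) opA lgroup_mulgV op1x. Qed.

Lemma lgroup_solve_l b c : exists! a, op a b = c.
Proof.
exists (op c (inv b)); split; first by rewrite -opA opVx lgroup_mulg1.
by move=> a <-; rewrite -opA lgroup_mulgV lgroup_mulg1.
Qed.

Lemma lgroup_solve_r a c : exists! b, op a b = c.
Proof.
exists (op (inv a) c); split; first by rewrite opA lgroup_mulgV op1x.
by move=> b <-; rewrite lgroup_mulKg.
Qed.

End LeftAxiomsGroup.

Section DiagonalOperation.

Variables (A : Type) (n : nat) (theta : ('I_n -> A) -> A -> A).
Hypothesis thetaA : two_associative theta.

Lemma diag_app_assoc : associative (diag_app theta).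
Proof. by move=> x y z; rewrite /diag_app thetaA. Qed.

Variables (alpha : 'I_n -> A -> A -> A) (e : A).
Hypotheses (alpha_diag : forall i a, alpha i a a = e)
  (theta_alpha : forall a b, theta (fun i => alpha i a b) b = a).

Lemma diag_app_id_l : left_id e (diag_app theta).
Proof.
move=> x; rewrite /diag_app -{2}(theta_alpha x x).
by congr theta; apply: functional_extensionality => i; rewrite alpha_diag.
Qed.

Lemma theta_diag_factor a x : theta a x = diag_app theta (theta a e) x.
Proof. by rewrite -{1}(diag_app_id_l x) /diag_app thetaA. Qed.

Definition diag_inv b := theta (fun i => alpha i e b) e.

Lemma diag_app_inv_l : left_inverse e diag_inv (diag_app theta).
Proof. by move=> b; rewrite /diag_inv -theta_diag_factor theta_alpha. Qed.

End DiagonalOperation.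

Theorem corollary4p5 (A : Type) (n : nat) (Hn : 1 <= n)
  (theta : ('I_n -> A) -> A -> A) (alpha : 'I_n -> A -> A -> A) (e : A)
  (Halpha_diag : forall (i : 'I_n) (a : A), alpha i a a = e)
  (Hrecover : forall a b : A, theta (fun i => alpha i a b) b = a)
  (Hassoc : two_associative theta) :
  (forall a : A, diag_app theta a e = a) /\
  (forall b c : A, exists! a : A, diag_app theta a b = c) /\
  (forall a c : A, exists! b : A, diag_app theta a b = c).
Proof.
have opA := diag_app_assoc Hassoc.
have op1x := diag_app_id_l Halpha_diag Hrecover.
have opVx := diag_app_inv_l Hassoc Halpha_diag Hrecover.
split; first exact: lgroup_mulg1 opA op1x opVx.
split=> [b c | a c].
- exact: (lgroup_solve_l opA op1x opVx b c).
- exact: (lgroup_solve_r opA op1x opVx a c).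
Qed.
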